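(* Let $d\ge1$, $n\ge2$, $N\ge1$, $L>0$, $h=L/N$, $\Delta t>0$, and let $b_{ij}>0$ with $b_{ij}=b_{ji}$ for $i\neq j$. Let $\rho^k$ be an $n$-tuple of cell-centered grid functions on the $d$-dimensional periodic grid with $\rho^k_{i,\ell}>0$ and $\sum_{i=1}^n\rho^k_{i,\ell}=1$ for all $i,\ell$. Then there exists $\delta_0>0$ such that for every $0<\delta\le\delta_0$: a cell-centered $n$-tuple $\rho^{k+1}$ with $\rho^{k+1}_{i,\ell}>0$ for all $i,\ell$ is a solution of the scheme (i.e. there is an edge-centered $n$-tuple $v^{k+1}$ with, for $i=1,\dots,n$, $$\frac{\rho^{k+1}_i-\rho^k_i}{\Delta t}+d_h(\hat\rho^k_iv^{k+1}_i)=0\ \text{at cell points},\quad -\sum_{j=1}^nb_{ij}\hat\rho^k_j(v^{k+1}_i-v^{k+1}_j)=D_h\log\rho^{k+1}_i-\frac{\sum_{j=1}^n\hat\rho^k_jD_h\log\rho^{k+1}_j}{\sum_{j=1}^n\hat\rho^k_j},\quad\sum_{j=1}^n\hat\rho^k_jv^{k+1}_j=0\ \text{at edge points})$$ if and only if $\rho^{k+1}$ is the $\rho$-component of a minimizer over $K_\delta$ of $$J(\rho,w)=\frac{1}{4\Delta t}\,h^d\sum_{\text{edge points }e}\sum_{i,j=1}^nb_{ij}\hat\rho^k_{i,e}\hat\rho^k_{j,e}(w_{i,e}-w_{j,e})^2+h^d\sum_{\ell\in\{1,\dots,N\}^d}\sum_{i=1}^n\rho_{i,\ell}\log\rho_{i,\ell},$$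 where $K_\delta$ is the set of pairs $(\rho,w)$, $\rho$ a cell-centered and $w$ an edge-centered $n$-tuple, with $\rho_{i,\ell}\ge\delta$, $\rho_{i,\ell}-\rho^k_{i,\ell}+(d_h(\hat\rho^k_iw_i))_\ell=0$, $\sum_{i=1}^n\rho_{i,\ell}=1$ for all $i$ and $\ell\in\{1,\dots,N\}^d$, and $\sum_{i=1}^n\hat\rho^k_{i,e}w_{i,e}=0$ at every edge point $e$.
   Context: Multidimensional periodic grid: cell points $\ell=(\ell_1,\dots,\ell_d)\in\mathbb Z^d$ modulo $N$ in each coordinate; edge points $\ell+\frac12e_s$, $s=1,\dots,d$, $N$-periodic. $(D_hf)_{\ell+\frac12e_s}=(f_{\ell+e_s}-f_\ell)/h$; $(d_h\phi)_\ell=\sum_{s=1}^d(\phi_{\ell+\frac12e_s}-\phi_{\ell-\frac12e_s})/h$; $\hat f_{\ell+\frac12e_s}=(f_\ell+f_{\ell+e_s})/2$. Products and logarithms are pointwise; terms with $i=j$ vanish so $b_{ii}$ is irrelevant. *)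

From HB Require Import structures.
From mathcomp Require Import all_boot all_order all_algebra.
From mathcomp Require Import all_classical all_reals all_analysis.
Set Implicit Arguments. Unset Strict Implicit. Unset Printing Implicit Defensive.
Import Order.TTheory GRing.Theory Num.Theory.
Local Open Scope ring_scope.

(* Periodic d-dimensional grid with N points per direction:
   cell points l in (Z/NZ)^d, represented as functions 'I_d -> 'I_N
   (coordinates taken modulo N, indices 0..N-1 instead of 1..N).
   The edge point l + 1/2 e_s is represented by the pair (l, s). *)
Definition cell (d N : nat) := {ffun 'I_d -> 'I_N}.

Definition shiftp (d N : nat) (l : cell d N) (s : 'I_d) : cell d N :=
  [ffun t => if t == s then ordS (l t) else l t].
Definition shiftm (d N : nat) (l : cell d N) (s : 'I_d) : cell d N :=
  [ffun t => if t == s then ord_pred (l t) else l t].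

Section Ops.
Variables (R : realType) (d N : nat) (h : R).

Definition Dh (f : cell d N -> R) : cell d N -> 'I_d -> R :=
  fun l s => (f (shiftp l s) - f l) / h.

Definition dh (phi : cell d N -> 'I_d -> R) : cell d N -> R :=
  fun l => \sum_(s < d) (phi l s - phi (shiftm l s) s) / h.

Definition hat (f : cell d N -> R) : cell d N -> 'I_d -> R :=
  fun l s => (f l + f (shiftp l s)) / 2.

Variables (n : nat) (dt : R) (b : 'I_n -> 'I_n -> R)
          (rk : 'I_n -> cell d N -> R).

Definition scheme_solution (r1 : 'I_n -> cell d N -> R) : Prop :=
  exists v : 'I_n -> cell d N -> 'I_d -> R,
    (forall i l, (r1 i l - rk i l) / dt
                 + dh (fun l' s => hat (rk i) l' s * v i l' s) l = 0) /\
    (forall i l s,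
        - (\sum_(j < n) b i j * hat (rk j) l s * (v i l s - v j l s))
        = Dh (fun l' => ln (r1 i l')) l s
          - (\sum_(j < n) hat (rk j) l s * Dh (fun l' => ln (r1 j l')) l s)
            / (\sum_(j < n) hat (rk j) l s)) /\
    (forall l s, \sum_(j < n) hat (rk j) l s * v j l s = 0).

Definition Kdelta (delta : R) (r : 'I_n -> cell d N -> R)
    (w : 'I_n -> cell d N -> 'I_d -> R) : Prop :=
  (forall i l, delta <= r i l) /\
  (forall i l, r i l - rk i l
               + dh (fun l' s => hat (rk i) l' s * w i l' s) l = 0) /\
  (forall l, \sum_(i < n) r i l = 1) /\
  (forall l s, \sum_(i < n) hat (rk i) l s * w i l s = 0).

Definition Jfun (r : 'I_n -> cell d N -> R)
    (w : 'I_n -> cell d N -> 'I_d -> R) : R :=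
  (4 * dt)^-1 * h ^+ d *
    (\sum_(l : cell d N) \sum_(s < d) \sum_(i < n) \sum_(j < n)
       b i j * hat (rk i) l s * hat (rk j) l s * (w i l s - w j l s) ^+ 2)
  + h ^+ d * (\sum_(l : cell d N) \sum_(i < n) r i l * ln (r i l)).

Definition is_minimizer (delta : R) (r : 'I_n -> cell d N -> R)
    (w : 'I_n -> cell d N -> 'I_d -> R) : Prop :=
  Kdelta delta r w /\
  forall r' w', Kdelta delta r' w' -> Jfun r w <= Jfun r' w'.

End Ops.

(* J is convex on the affine space of pairs satisfying the linear constraints of
   K_delta (x log x is convex and the friction term is a nonnegative quadratic form).
   Summation by parts and the symmetry of b show that its derivative in an admissible
   direction (dr, dw) is h^d sum_e sum_i rhat_i dw_i F_i, with
   F_i = dt^-1 sum_j b_ij rhat_j (w_i - w_j) + D_h log r_i.  Admissible directions are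
   exactly those with sum_i rhat_i dw_i = 0 on every edge, so (r, w) is a critical
   point iff F_i is independent of i, which for w = dt v is the scheme.  Finally,
   minimality along the segment towards (rho^k, 0) bounds every minimizer below by a
   constant depending only on rho^k, so for small delta the constraint r >= delta is
   inactive: minimizers over K_delta are exactly the critical points. *)

From HB Require Import structures.
From mathcomp Require Import all_boot all_order all_algebra.
From mathcomp Require Import all_classical all_reals all_analysis.
From mathcomp Require Import ring lra.
Import Order.TTheory GRing.Theory Num.Theory.
Set Implicit Arguments. Unset Strict Implicit. Unset Printing Implicit Defensive.
Local Open Scope ring_scope.

Section OrderedFacts.
Variable R : realFieldType.

Lemma le_sum_term (I : finType) (F : I -> R) i0 :
  (forall i, 0 <= F i) -> F i0 <= \sum_i F i.
Proof. by move=> F_ge0; rewrite (bigD1 i0) //= lerDl sumr_ge0. Qed.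

Lemma sum_le_term (I : finType) (F : I -> R) i0 :
  (forall i, F i <= 0) -> \sum_i F i <= F i0.
Proof. by move=> F_le0; rewrite (bigD1 i0) //= gerDl sumr_le0. Qed.

Lemma pos_lower_bound (I : finType) (f : I -> R) :
  (forall x, 0 < f x) -> exists2 c, 0 < c & forall x, c <= f x.
Proof.
move=> f_gt0; exists (\big[Num.min/1]_x f x); last by move=> x; exact: bigmin_le.
by apply: (big_ind (fun y => 0 < y)) => // x y x_gt0 y_gt0; rewrite lt_min x_gt0.
Qed.

Lemma segment_ge (a x y t : R) : 0 <= t <= 1 -> a <= x -> a <= y ->
  a <= x + t * (y - x).
Proof.
move=> /andP[t_ge0 t_le1] ax ay.
have : 0 <= t * (y - a) by rewrite mulr_ge0 ?subr_ge0.
have : 0 <= (1 - t) * (x - a) by rewrite mulr_ge0 ?subr_ge0.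
nra.
Qed.

Lemma segment_gt (a x y t : R) : 0 <= t <= 1 -> a < x -> a < y ->
  a < x + t * (y - x).
Proof.
move=> t01 ax ay; apply: (@lt_le_trans _ _ (Num.min x y)); first by rewrite lt_min ax.
by apply: segment_ge; rewrite // ge_min lexx ?orbT.
Qed.

Lemma slope_ge0 (t0 a c : R) : 0 < t0 ->
  (forall t, 0 < t <= t0 -> 0 <= t * a + t ^+ 2 * c) -> 0 <= a.
Proof.
move=> t0_gt0 quad_ge0; rewrite leNgt; apply/negP => a_lt0.
pose k := `|c| + 1; have k_gt0 : 0 < k by rewrite ltr_pwDr.
pose t := Num.min t0 (- a / (2 * k)).
have t_gt0 : 0 < t by rewrite lt_min t0_gt0 divr_gt0 ?mulr_gt0 ?oppr_gt0.
have t_le_t0 : t <= t0 by rewrite ge_min lexx.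
have tk_le : t * (2 * k) <= - a by rewrite -ler_pdivlMr ?mulr_gt0 // ge_min lexx orbT.
have c_le_k : c <= k by have := ler_norm c; rewrite /k; lra.
have := quad_ge0 t; rewrite t_gt0 t_le_t0 => /(_ isT).
have := ler_wpM2l (sqr_ge0 t) c_le_k; have := ler_wpM2l (ltW t_gt0) tk_le.
rewrite expr2; nra.
Qed.

Lemma slope_eq0 (t0 a c : R) : 0 < t0 ->
  (forall t, `|t| <= t0 -> 0 <= t * a + t ^+ 2 * c) -> a = 0.
Proof.
move=> t0_gt0 quad_ge0; apply/eqP; rewrite eq_le -oppr_ge0; apply/andP; split.
- apply: (slope_ge0 (c := c) t0_gt0) => t /andP[t_gt0 t_le].
  by have := quad_ge0 (- t); rewrite normrN gtr0_norm // sqrrN mulNr mulrN => /(_ t_le).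
- apply: (slope_ge0 (c := c) t0_gt0) => t /andP[t_gt0 t_le].
  by apply: quad_ge0; rewrite gtr0_norm.
Qed.

End OrderedFacts.

Section XlnX.
Variable R : realType.

Lemma ln_le_sub1 (x : R) : 0 < x -> ln x <= x - 1.
Proof.
by move=> x_gt0; have := @le_ln1Dx R (x - 1); rewrite addrCA subrr addr0; apply; lra.
Qed.

Lemma xlnx_ge_tangent (x y : R) : 0 < x -> 0 < y ->
  x * ln x + (ln x + 1) * (y - x) <= y * ln y.
Proof.
move=> x_gt0 y_gt0.
have := ln_le_sub1 (divr_gt0 x_gt0 y_gt0); rewrite ln_div ?posrE // => le_ln.
have := ler_wpM2l (ltW y_gt0) le_ln.
have -> : y * (x / y - 1) = x - y by field; rewrite gt_eqF.
nra.
Qed.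

Lemma xlnx_le_tangent_sq (x y : R) : 0 < x -> 0 < y ->
  y * ln y <= x * ln x + (ln x + 1) * (y - x) + (y - x) ^+ 2 / x.
Proof.
move=> x_gt0 y_gt0.
have := ln_le_sub1 (divr_gt0 y_gt0 x_gt0); rewrite ln_div ?posrE // => le_ln.
have := ler_wpM2l (ltW y_gt0) le_ln.
have -> : y * (y / x - 1) = (y - x) + (y - x) ^+ 2 / x by field; rewrite gt_eqF.
nra.
Qed.

Lemma xlnx_geN1 (x : R) : 0 < x -> -1 <= x * ln x.
Proof. by move=> x_gt0; have := xlnx_ge_tangent ltr01 x_gt0; rewrite ln1; lra. Qed.

End XlnX.

Section Grid.
Variables (R : realType) (d N : nat).
Context {h : R}.
Local Notation cellT := (cell d N).

Lemma shiftpK s : cancel (fun l : cellT => shiftp l s) (fun l => shiftm l s).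
Proof.
by move=> l; apply/ffunP => t; rewrite !ffunE; case: eqP => [->|]; rewrite ?ordSK.
Qed.

Lemma eq_dh (phi psi : cellT -> 'I_d -> R) :
  (forall l s, phi l s = psi l s) -> dh h phi =1 dh h psi.
Proof. by move=> E l; apply: eq_bigr => s _; rewrite !E. Qed.

Lemma dhD (phi psi : cellT -> 'I_d -> R) l :
  dh h (fun l s => phi l s + psi l s) l = dh h phi l + dh h psi l.
Proof. by rewrite /dh -big_split; apply: eq_bigr => s _ /=; ring. Qed.

Lemma dhB (phi psi : cellT -> 'I_d -> R) l :
  dh h (fun l s => phi l s - psi l s) l = dh h phi l - dh h psi l.
Proof. by rewrite /dh -sumrB; apply: eq_bigr => s _ /=; ring. Qed.

Lemma dhZ a (phi : cellT -> 'I_d -> R) l :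
  dh h (fun l s => a * phi l s) l = a * dh h phi l.
Proof. by rewrite /dh mulr_sumr; apply: eq_bigr => s _; ring. Qed.

Lemma dh0 l : dh h (fun (_ : cellT) (_ : 'I_d) => 0) l = 0.
Proof. by rewrite /dh big1 // => s _; rewrite subrr mul0r. Qed.

Lemma dh_sum (I : finType) (phi : I -> cellT -> 'I_d -> R) l :
  \sum_i dh h (phi i) l = dh h (fun l s => \sum_i phi i l s) l.
Proof. by rewrite /dh exchange_big; apply: eq_bigr => s _; rewrite -mulr_suml sumrB. Qed.

Lemma summation_by_parts (f : cellT -> R) (phi : cellT -> 'I_d -> R) :
  \sum_l f l * dh h phi l = - \sum_l \sum_s phi l s * Dh h f l s.
Proof.
rewrite /dh /Dh; under eq_bigr do rewrite mulr_sumr.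
rewrite exchange_big [X in - X]exchange_big -sumrN; apply: eq_bigr => s _ /=.
have shift : \sum_l f l * phi (shiftm l s) s / h = \sum_l f (shiftp l s) * phi l s / h.
  by rewrite (reindex_inj (can_inj (@shiftpK s))); apply: eq_bigr => l _; rewrite shiftpK.
transitivity (\sum_l f l * phi l s / h - \sum_l f l * phi (shiftm l s) s / h).
  by rewrite -sumrB; apply: eq_bigr => l _; ring.
by rewrite shift -sumrB -sumrN; apply: eq_bigr => l _; ring.
Qed.

Lemma sum_dh (phi : cellT -> 'I_d -> R) : \sum_l dh h phi l = 0.
Proof.
under eq_bigr do rewrite -[dh _ _ _]mul1r.
rewrite summation_by_parts big1 ?oppr0 // => l _.
by rewrite big1 // => s _; rewrite /Dh subrr mul0r mulr0.
Qed.

End Grid.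

Section Model.
Variables (R : realType) (d N : nat) (h : R) (n : nat) (dt : R)
  (b : 'I_n -> 'I_n -> R) (rk : 'I_n -> cell d N -> R).
Hypotheses (h_gt0 : 0 < h) (dt_gt0 : 0 < dt)
  (b_gt0 : forall i j, i != j -> 0 < b i j)
  (b_sym : forall i j, i != j -> b i j = b j i)
  (rk_gt0 : forall i l, 0 < rk i l)
  (rk_sum1 : forall l, \sum_(i < n) rk i l = 1).
Local Notation cellT := (cell d N).
Local Notation rhat i := (hat (rk i)).
Local Notation J := (Jfun h dt b rk).

Lemma hat_gt0 i l s : 0 < rhat i l s.
Proof. by rewrite /hat divr_gt0 ?addr_gt0. Qed.

Lemma hat_sum1 l s : \sum_(i < n) rhat i l s = 1.
Proof. by rewrite /hat -mulr_suml big_split /= !rk_sum1; field. Qed.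

Definition drag (a w : 'I_n -> R) i := \sum_(j < n) b i j * a j * (w i - w j).

Lemma dragZ (a w : 'I_n -> R) k i : drag a (fun j => k * w j) i = k * drag a w i.
Proof. by rewrite /drag mulr_sumr; apply: eq_bigr => j _; ring. Qed.

Lemma pair_sum_drag (a w x : 'I_n -> R) :
  \sum_(i < n) \sum_(j < n) b i j * a i * a j * ((w i - w j) * (x i - x j))
  = 2 * \sum_(i < n) a i * x i * drag a w i.
Proof.
have drag_x : \sum_(i < n) \sum_(j < n) b i j * a i * a j * (w i - w j) * x i
    = \sum_(i < n) a i * x i * drag a w i.
  by apply: eq_bigr => i _; rewrite /drag mulr_sumr; apply: eq_bigr => j _; ring.
have swap : \sum_(i < n) \sum_(j < n) b i j * a i * a j * (w i - w j) * x j
    = - \sum_(i < n) a i * x i * drag a w i.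
  rewrite exchange_big -sumrN; apply: eq_bigr => j _.
  rewrite /drag mulr_sumr -sumrN; apply: eq_bigr => i _.
  by case: (eqVneq i j) => [->|ij]; [ring | rewrite b_sym //; ring].
transitivity (\sum_(i < n) \sum_(j < n) b i j * a i * a j * (w i - w j) * x i
  - \sum_(i < n) \sum_(j < n) b i j * a i * a j * (w i - w j) * x j).
  by rewrite -sumrB; apply: eq_bigr => i _; rewrite -sumrB; apply: eq_bigr => j _; ring.
by rewrite drag_x swap; ring.
Qed.

Lemma sum_drag0 (a w : 'I_n -> R) : \sum_(i < n) a i * drag a w i = 0.
Proof.
have := pair_sum_drag a w (fun _ => 1).
rewrite big1 => [|i _]; last by rewrite big1 // => j _; rewrite subrr !mulr0.
under eq_bigr do rewrite mulr1.
lra.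
Qed.

Definition friction (w : 'I_n -> cellT -> 'I_d -> R) :=
  \sum_(l : cellT) \sum_(s < d) \sum_(i < n) \sum_(j < n)
    b i j * rhat i l s * rhat j l s * (w i l s - w j l s) ^+ 2.

Definition friction_form (w x : 'I_n -> cellT -> 'I_d -> R) :=
  \sum_(l : cellT) \sum_(s < d) \sum_(i < n) \sum_(j < n)
    b i j * rhat i l s * rhat j l s * ((w i l s - w j l s) * (x i l s - x j l s)).

Definition entropy (r : 'I_n -> cellT -> R) :=
  \sum_(l : cellT) \sum_(i < n) r i l * ln (r i l).

Lemma JfunE r w : J r w = (4 * dt)^-1 * h ^+ d * friction w + h ^+ d * entropy r.
Proof. by []. Qed.

Lemma friction_ge0 w : 0 <= friction w.
Proof.
apply: sumr_ge0 => l _; apply: sumr_ge0 => s _; apply: sumr_ge0 => i _.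
apply: sumr_ge0 => j _; case: (eqVneq i j) => [->|ij].
  by rewrite subrr expr0n mulr0.
rewrite mulr_ge0 ?sqr_ge0 //; apply/ltW.
by rewrite mulr_gt0 ?hat_gt0 // mulr_gt0 ?hat_gt0 // b_gt0.
Qed.

Lemma friction_expand w x t :
  friction (fun i l s => w i l s + t * x i l s)
  = friction w + 2 * t * friction_form w x + t ^+ 2 * friction x.
Proof.
rewrite /friction /friction_form !mulr_sumr -!big_split; apply: eq_bigr => l _.
rewrite !mulr_sumr -!big_split; apply: eq_bigr => s _.
rewrite !mulr_sumr -!big_split; apply: eq_bigr => i _.
rewrite !mulr_sumr -!big_split; apply: eq_bigr => j _ /=; ring.
Qed.

Lemma friction_formE w x :
  friction_form w x = 2 * \sum_(l : cellT) \sum_(s < d) \sum_(i < n)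
    rhat i l s * x i l s * drag (fun j => rhat j l s) (fun j => w j l s) i.
Proof.
rewrite mulr_sumr; apply: eq_bigr => l _; rewrite mulr_sumr; apply: eq_bigr => s _.
by rewrite -pair_sum_drag.
Qed.

Lemma entropy_le_taylor r dr t :
  (forall i l, 0 < r i l) -> (forall i l, 0 < r i l + t * dr i l) ->
  entropy (fun i l => r i l + t * dr i l)
  <= entropy r + t * (\sum_(l : cellT) \sum_(i < n) (ln (r i l) + 1) * dr i l)
     + t ^+ 2 * (\sum_(l : cellT) \sum_(i < n) dr i l ^+ 2 / r i l).
Proof.
move=> r_gt0 rt_gt0; rewrite /entropy !mulr_sumr -!big_split.
apply: ler_sum => l _; rewrite !mulr_sumr -!big_split; apply: ler_sum => i _ /=.
apply: (le_trans (xlnx_le_tangent_sq (r_gt0 i l) (rt_gt0 i l))).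
have -> : r i l + t * dr i l - r i l = t * dr i l by ring.
lra.
Qed.

Lemma entropy_ge_tangent r r' :
  (forall i l, 0 < r i l) -> (forall i l, 0 < r' i l) ->
  entropy r + \sum_(l : cellT) \sum_(i < n) (ln (r i l) + 1) * (r' i l - r i l)
  <= entropy r'.
Proof.
move=> r_gt0 r'_gt0; rewrite /entropy -big_split; apply: ler_sum => l _.
by rewrite -big_split; apply: ler_sum => i _; apply: xlnx_ge_tangent.
Qed.

Definition dJ r w (dr : 'I_n -> cellT -> R) dw :=
  (2 * dt)^-1 * h ^+ d * friction_form w dw
  + h ^+ d * \sum_(l : cellT) \sum_(i < n) (ln (r i l) + 1) * dr i l.

Definition d2J_bound (r dr : 'I_n -> cellT -> R) dw :=
  (4 * dt)^-1 * h ^+ d * friction dw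
  + h ^+ d * \sum_(l : cellT) \sum_(i < n) dr i l ^+ 2 / r i l.

Lemma J_le_taylor r w dr dw t :
  (forall i l, 0 < r i l) -> (forall i l, 0 < r i l + t * dr i l) ->
  J (fun i l => r i l + t * dr i l) (fun i l s => w i l s + t * dw i l s)
  <= J r w + t * dJ r w dr dw + t ^+ 2 * d2J_bound r dr dw.
Proof.
move=> r_gt0 rt_gt0; rewrite !JfunE friction_expand /dJ /d2J_bound.
have := ler_wpM2l (exprn_ge0 d (ltW h_gt0)) (entropy_le_taylor r_gt0 rt_gt0).
have -> : (2 * dt)^-1 = (4 * dt)^-1 * 2 by field; rewrite gt_eqF.
lra.
Qed.

Lemma friction_sub w w' :
  friction w' = friction w + 2 * friction_form w (fun i l s => w' i l s - w i l s)
                + friction (fun i l s => w' i l s - w i l s).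
Proof.
transitivity (friction (fun i l s => w i l s + 1 * (w' i l s - w i l s))).
  by congr friction; apply/funext => i; apply/funext => l; apply/funext => s; ring.
by rewrite friction_expand mulr1 expr1n mul1r.
Qed.

Lemma J_ge_tangent r w r' w' :
  (forall i l, 0 < r i l) -> (forall i l, 0 < r' i l) ->
  J r w + dJ r w (fun i l => r' i l - r i l) (fun i l s => w' i l s - w i l s)
  <= J r' w'.
Proof.
move=> r_gt0 r'_gt0; rewrite !JfunE (friction_sub w w') /dJ.
have := ler_wpM2l (exprn_ge0 d (ltW h_gt0)) (entropy_ge_tangent r_gt0 r'_gt0).
have : 0 <= (4 * dt)^-1 * h ^+ d * friction (fun i l s => w' i l s - w i l s).
  by rewrite !mulr_ge0 ?invr_ge0 ?exprn_ge0 ?friction_ge0 ?ltW ?mulr_gt0.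
have -> : (2 * dt)^-1 = (4 * dt)^-1 * 2 by field; rewrite gt_eqF.
lra.
Qed.

(* [Kdelta h rk delta r w] unfolds to [(forall i l, delta <= r i l) /\ admissible r w]. *)
Definition admissible (r : 'I_n -> cellT -> R) (w : 'I_n -> cellT -> 'I_d -> R) :=
  (forall i l, r i l - rk i l + dh h (fun l' s => rhat i l' s * w i l' s) l = 0) /\
  (forall l, \sum_(i < n) r i l = 1) /\
  (forall l s, \sum_(i < n) rhat i l s * w i l s = 0).

Definition tangent (dr : 'I_n -> cellT -> R) (dw : 'I_n -> cellT -> 'I_d -> R) :=
  (forall i l, dr i l + dh h (fun l' s => rhat i l' s * dw i l' s) l = 0) /\
  (forall l, \sum_(i < n) dr i l = 0) /\
  (forall l s, \sum_(i < n) rhat i l s * dw i l s = 0).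

Lemma sum_dh_flux0 w : (forall l s, \sum_(i < n) rhat i l s * w i l s = 0) ->
  forall l, \sum_(i < n) dh h (fun l' s => rhat i l' s * w i l' s) l = 0.
Proof. by move=> flux0 l; rewrite dh_sum (eq_dh flux0) dh0. Qed.

Lemma tangent_flux dw : (forall l s, \sum_(i < n) rhat i l s * dw i l s = 0) ->
  tangent (fun i l => - dh h (fun l' s => rhat i l' s * dw i l' s) l) dw.
Proof.
move=> flux0; split; [by move=> i l; rewrite addNr | split=> // l].
by rewrite sumrN sum_dh_flux0 ?oppr0.
Qed.

Lemma admissible_rk : admissible rk (fun _ _ _ => 0).
Proof.
split; [move=> i l | split=> // l s]; last by rewrite big1 // => i _; rewrite mulr0.
by rewrite subrr add0r (eq_dh (fun l s => mulr0 _)) dh0.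
Qed.

Lemma tangentB r w r' w' : admissible r w -> admissible r' w' ->
  tangent (fun i l => r' i l - r i l) (fun i l s => w' i l s - w i l s).
Proof.
move=> [mass [sum1 flux0]] [mass' [sum1' flux0']]; split; [|split].
- move=> i l; rewrite (eq_dh (fun l s => mulrBr _ _ _)) dhB.
  by have := mass i l; have := mass' i l; lra.
- by move=> l; rewrite sumrB sum1 sum1' subrr.
- by move=> l s; under eq_bigr do rewrite mulrBr; rewrite sumrB flux0 flux0' subrr.
Qed.

Lemma admissibleD r w dr dw t : admissible r w -> tangent dr dw ->
  admissible (fun i l => r i l + t * dr i l) (fun i l s => w i l s + t * dw i l s).
Proof.
move=> [mass [sum1 flux0]] [dmass [dsum0 dflux0]]; split; [|split].
- move=> i l.
  rewrite (eq_dh (psi := fun l s => rhat i l s * w i l s + t * (rhat i l s * dw i l s)));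
    last by move=> ? ?; ring.
  rewrite dhD dhZ; have := mass i l; have := dmass i l; nra.
- by move=> l; rewrite big_split /= -mulr_sumr sum1 dsum0 mulr0 addr0.
- move=> l s; under eq_bigr do rewrite mulrDr mulrCA.
  by rewrite big_split /= -mulr_sumr flux0 dflux0 mulr0 addr0.
Qed.

(* With [w = dt * v], the momentum equation of the scheme states that
   [force r1 w i l s] does not depend on [i]. *)
Definition force r w i l s :=
  dt^-1 * drag (fun j => rhat j l s) (fun j => w j l s) i
  + Dh h (fun l' => ln (r i l')) l s.

Definition uniform_force r w :=
  exists F : cellT -> 'I_d -> R, forall i l s, force r w i l s = F l s.

Lemma scheme_solutionP r1 :
  scheme_solution h dt b rk r1 <-> exists w, admissible r1 w /\ uniform_force r1 w.
Proof.
split=> [[v [mass [momentum flux0]]] | [w [[mass [_ flux0]] [F forceE]]]].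
- have flux0' l s : \sum_(i < n) rhat i l s * (dt * v i l s) = 0.
    by under eq_bigr do rewrite mulrCA; rewrite -mulr_sumr flux0 mulr0.
  have mass' i l :
      r1 i l - rk i l + dh h (fun l' s => rhat i l' s * (dt * v i l' s)) l = 0.
    rewrite (eq_dh (fun l s => mulrCA _ _ _)) dhZ.
    have -> : r1 i l - rk i l = dt * ((r1 i l - rk i l) / dt) by field; rewrite gt_eqF.
    by rewrite -mulrDr mass mulr0.
  exists (fun i l s => dt * v i l s); split; first split=> //; first split=> // l.
    have : \sum_(i < n) (r1 i l - rk i l
        + dh h (fun l' s => rhat i l' s * (dt * v i l' s)) l) = 0 by rewrite big1.
    rewrite big_split sumrB rk_sum1 sum_dh_flux0 //= addr0 => /eqP.
    by rewrite subr_eq0 => /eqP.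
  exists (fun l s => (\sum_(j < n) rhat j l s * Dh h (fun l' => ln (r1 j l')) l s)
                     / \sum_(j < n) rhat j l s) => i l s.
  by rewrite /force dragZ mulKf ?gt_eqF //; have := momentum i l s; rewrite /drag; lra.
- exists (fun i l s => dt^-1 * w i l s); split; [|split].
  + move=> i l; rewrite (eq_dh (fun l s => mulrCA _ _ _)) dhZ [dt^-1 * _]mulrC.
    by rewrite -mulrDl mass mul0r.
  + move=> i l s; rewrite hat_sum1 divr1.
    have DlnE j : Dh h (fun l' => ln (r1 j l')) l s
        = F l s - dt^-1 * drag (fun k => rhat k l s) (fun k => w k l s) j.
      by rewrite -(forceE j l s) /force; ring.
    have avgE : \sum_(j < n) rhat j l s * Dh h (fun l' => ln (r1 j l')) l s = F l s.
      under eq_bigr do rewrite DlnE mulrBr mulrCA.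
      by rewrite sumrB -mulr_suml hat_sum1 -mulr_sumr sum_drag0 mulr0 subr0 mul1r.
    rewrite avgE DlnE -/(drag (fun k => rhat k l s) (fun k => dt^-1 * w k l s) i) dragZ.
    by ring.
  + by move=> l s; under eq_bigr do rewrite mulrCA; rewrite -mulr_sumr flux0 mulr0.
Qed.

Lemma dJ_force r w dr dw :
  (forall i l, dr i l + dh h (fun l' s => rhat i l' s * dw i l' s) l = 0) ->
  dJ r w dr dw = h ^+ d * \sum_(l : cellT) \sum_(s < d) \sum_(i < n)
                              rhat i l s * dw i l s * force r w i l s.
Proof.
move=> mass.
have drE i l : dr i l = - dh h (fun l' s => rhat i l' s * dw i l' s) l.
  by apply/eqP; rewrite -addr_eq0 mass.
have mass_sum0 i : \sum_(l : cellT) dr i l = 0.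
  by under eq_bigr do rewrite drE; rewrite sumrN sum_dh oppr0.
have entropy_part : \sum_(l : cellT) \sum_(i < n) (ln (r i l) + 1) * dr i l
    = \sum_(l : cellT) \sum_(s < d) \sum_(i < n)
        rhat i l s * dw i l s * Dh h (fun l' => ln (r i l')) l s.
  under eq_bigr do under eq_bigr do rewrite mulrDl mul1r.
  rewrite exchange_big /=; under eq_bigr do rewrite big_split /= mass_sum0 addr0.
  under eq_bigr do under eq_bigr do rewrite drE mulrN.
  under eq_bigr do rewrite sumrN summation_by_parts opprK.
  rewrite exchange_big /=; apply: eq_bigr => l _; rewrite exchange_big /=.
  by apply: eq_bigr => s _; apply: eq_bigr => i _.
rewrite /dJ friction_formE entropy_part /force.
rewrite !mulr_sumr -!big_split; apply: eq_bigr => l _.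
rewrite !mulr_sumr -!big_split; apply: eq_bigr => s _.
rewrite !mulr_sumr -!big_split; apply: eq_bigr => i _ /=.
by field; rewrite gt_eqF.
Qed.

Lemma uniform_force_dJ0 r w dr dw :
  uniform_force r w -> tangent dr dw -> dJ r w dr dw = 0.
Proof.
move=> [F forceE] [mass [_ flux0]]; rewrite dJ_force // big1 ?mulr0 // => l _.
apply: big1 => s _; under eq_bigr do rewrite forceE.
by rewrite -mulr_suml flux0 mul0r.
Qed.

Definition unit_flux i0 l0 s0 : 'I_n -> cellT -> 'I_d -> R :=
  fun i l s => if [&& i == i0, l == l0 & s == s0] then (rhat i0 l0 s0)^-1 else 0.

Lemma sum_hat_unit_flux i0 l0 s0 l s :
  \sum_(i < n) rhat i l s * unit_flux i0 l0 s0 i l s = ((l == l0) && (s == s0))%:R.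
Proof.
rewrite (bigD1 i0) //= big1 ?addr0 => [|i /negbTE i_neq]; last first.
  by rewrite /unit_flux i_neq mulr0.
rewrite /unit_flux eqxx /=; case: eqP => [->|_]; case: eqP => [->|_] /=;
  by rewrite ?mulr0 // mulfV // gt_eqF ?hat_gt0.
Qed.

Lemma sum_unit_flux i0 l0 s0 (F : 'I_n -> cellT -> 'I_d -> R) :
  \sum_(l : cellT) \sum_(s < d) \sum_(i < n) rhat i l s * unit_flux i0 l0 s0 i l s * F i l s
  = F i0 l0 s0.
Proof.
rewrite (bigD1 l0) //= [X in _ + X]big1 ?addr0 => [|l /negbTE l_neq]; last first.
  by do 2!(apply: big1 => ? _); rewrite /unit_flux l_neq andbF mulr0 mul0r.
rewrite (bigD1 s0) //= [X in _ + X]big1 ?addr0 => [|s /negbTE s_neq]; last first.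
  by apply: big1 => ? _; rewrite /unit_flux s_neq !andbF mulr0 mul0r.
rewrite (bigD1 i0) //= [X in _ + X]big1 ?addr0 => [|i /negbTE i_neq]; last first.
  by rewrite /unit_flux i_neq mulr0 mul0r.
by rewrite /unit_flux !eqxx /= mulfV ?mul1r // gt_eqF ?hat_gt0.
Qed.

(* Testing dJ against a unit flux of species i0, compensated by species j0, across
   a single edge isolates the difference of their forces on that edge. *)
Lemma force_eq_of_dJ0 r w :
  (forall dr dw, tangent dr dw -> dJ r w dr dw = 0) ->
  forall i0 j0 l0 s0, force r w i0 l0 s0 = force r w j0 l0 s0.
Proof.
move=> dJ0 i0 j0 l0 s0.
pose dw i l s := unit_flux i0 l0 s0 i l s - unit_flux j0 l0 s0 i l s.
have flux0 l s : \sum_(i < n) rhat i l s * dw i l s = 0.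
  by under eq_bigr do rewrite mulrBr; rewrite sumrB !sum_hat_unit_flux subrr.
have sumE :
    \sum_(l : cellT) \sum_(s < d) \sum_(i < n) rhat i l s * dw i l s * force r w i l s
    = force r w i0 l0 s0 - force r w j0 l0 s0.
  rewrite -(sum_unit_flux i0 l0 s0 (force r w)) -(sum_unit_flux j0 l0 s0 (force r w)).
  rewrite -sumrB; apply: eq_bigr => l _; rewrite -sumrB; apply: eq_bigr => s _.
  by rewrite -sumrB; apply: eq_bigr => i _; rewrite /dw; ring.
have := dJ0 _ _ (tangent_flux flux0); rewrite dJ_force => [|i l]; last exact: addNr.
rewrite sumE => /eqP; rewrite mulf_eq0 expf_eq0 gt_eqF //= andbF subr_eq0.
by move/eqP.
Qed.

Lemma dJ0_uniform_force r w :
  (forall dr dw, tangent dr dw -> dJ r w dr dw = 0) -> uniform_force r w.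
Proof.
move=> dJ0; exists (fun l s => \sum_(j < n) rhat j l s * force r w j l s) => i l s.
under eq_bigr do rewrite (force_eq_of_dJ0 dJ0 _ i).
by rewrite -mulr_suml hat_sum1 mul1r.
Qed.

Lemma J_min_of_dJ0 r w : admissible r w -> (forall i l, 0 < r i l) ->
  (forall dr dw, tangent dr dw -> dJ r w dr dw = 0) ->
  forall r' w', admissible r' w' -> (forall i l, 0 < r' i l) -> J r w <= J r' w'.
Proof.
move=> adm r_gt0 dJ0 r' w' adm' r'_gt0.
by have := J_ge_tangent w w' r_gt0 r'_gt0; rewrite dJ0 ?addr0 //; apply: tangentB.
Qed.

Lemma dJ0_of_interior_min delta r w : 0 < delta ->
  is_minimizer h dt b rk delta r w -> (forall i l, delta < r i l) ->
  forall dr dw, tangent dr dw -> dJ r w dr dw = 0.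
Proof.
move=> delta_gt0 [[_ adm] r_min] r_gt_delta dr dw tan.
have [|c c_gt0 c_le] := pos_lower_bound
  (f := fun p : 'I_n * cellT => (r p.1 p.2 - delta) / (1 + `|dr p.1 p.2|)).
  by move=> [i l]; rewrite divr_gt0 ?subr_gt0 // ltr_pwDl.
apply: (slope_eq0 c_gt0 (c := d2J_bound r dr dw)) => t t_le_c.
have step_ge i l : delta <= r i l + t * dr i l.
  have := c_le (i, l); rewrite ler_pdivlMr ?ltr_pwDl //= => c_le_il.
  have : `|t * dr i l| <= r i l - delta.
    rewrite normrM; apply: le_trans c_le_il.
    by rewrite ler_pM ?normr_ge0 ?lerDr.
  by have := ler_norm (- (t * dr i l)); rewrite normrN; lra.
have r_gt0 i l : 0 < r i l := lt_trans delta_gt0 (r_gt_delta i l).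
have := J_le_taylor w dw r_gt0 (fun i l => lt_le_trans delta_gt0 (step_ge i l)).
have := r_min _ _ (conj step_ge (admissibleD t adm tan)).
lra.
Qed.

Definition min_toward_rk r w := forall t, 0 < t <= 1 ->
  J r w <= J (fun i l => r i l + t * (rk i l - r i l))
             (fun i l s => w i l s + t * (0 - w i l s)).

Lemma min_toward_rk_slope r w :
  admissible r w -> (forall i l, 0 < r i l) -> min_toward_rk r w ->
  0 <= \sum_(l : cellT) \sum_(i < n) ln (r i l) * (rk i l - r i l).
Proof.
move=> adm r_gt0 seg_min.
have slope : 0 <= dJ r w (fun i l => rk i l - r i l) (fun i l s => 0 - w i l s).
  apply: (slope_ge0 ltr01
    (c := d2J_bound r (fun i l => rk i l - r i l) (fun i l s => 0 - w i l s))).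
  move=> t /andP[t_gt0 t_le1].
  have seg_gt0 i l : 0 < r i l + t * (rk i l - r i l).
    by apply: segment_gt; rewrite ?(ltW t_gt0) ?t_le1 ?r_gt0 ?rk_gt0.
  have := J_le_taylor w (fun i l s => 0 - w i l s) r_gt0 seg_gt0.
  by have := seg_min t; rewrite t_gt0 t_le1 => /(_ isT); lra.
have formE : friction_form w (fun i l s => 0 - w i l s) = - friction w.
  rewrite /friction_form /friction -!sumrN; apply: eq_bigr => l _; rewrite -sumrN.
  apply: eq_bigr => s _; rewrite -sumrN; apply: eq_bigr => i _; rewrite -sumrN.
  by apply: eq_bigr => j _; ring.
have ln_sum : \sum_(l : cellT) \sum_(i < n) (ln (r i l) + 1) * (rk i l - r i l)
    = \sum_(l : cellT) \sum_(i < n) ln (r i l) * (rk i l - r i l).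
  apply: eq_bigr => l _; under eq_bigr do rewrite mulrDl mul1r.
  by rewrite big_split /= sumrB rk_sum1 adm.2.1 subrr addr0.
move: slope; rewrite /dJ formE ln_sum.
have : 0 <= (2 * dt)^-1 * h ^+ d * friction w.
  by rewrite !mulr_ge0 ?invr_ge0 ?exprn_ge0 ?friction_ge0 ?ltW ?mulr_gt0.
have := exprn_gt0 d h_gt0.
nra.
Qed.

Section Margin.
Variable c : R.
Hypotheses (c_gt0 : 0 < c) (c_le_rk : forall i l, c <= rk i l).

(* Minimality along the segment gives  sum rk ln r >= sum r ln r >= - #cells * n,
   and every term rk ln r is nonpositive, so each one is >= - #cells * n. *)
Lemma min_toward_rk_gt r w :
  admissible r w -> (forall i l, 0 < r i l) -> min_toward_rk r w ->
  forall i l, expR (- ((#|{: cellT}| * n)%:R + 1) / c) < r i l.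
Proof.
move=> adm r_gt0 seg_min i0 l0.
have slope := min_toward_rk_slope adm r_gt0 seg_min.
have r_le1 i l : r i l <= 1.
  by rewrite -(adm.2.1 l); apply: (le_sum_term (F := r ^~ l)) => j; apply: ltW.
have term_le0 i l : rk i l * ln (r i l) <= 0.
  by apply: mulr_ge0_le0; [apply: ltW | apply: ln_le0].
have card_sum : \sum_(l : cellT) \sum_(i < n) (1 : R) = (#|{: cellT}| * n)%:R.
  by under eq_bigr do rewrite sumr_const card_ord; rewrite sumr_const -mulrnA mulnC.
have entropy_ge : - (#|{: cellT}| * n)%:R <= entropy r.
  rewrite -card_sum -sumrN; apply: ler_sum => l _; rewrite -sumrN.
  by apply: ler_sum => i _; apply: xlnx_geN1.
have slopeE : \sum_(l : cellT) \sum_(i < n) ln (r i l) * (rk i l - r i l)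
    = \sum_(l : cellT) \sum_(i < n) rk i l * ln (r i l) - entropy r.
  by rewrite -sumrB; apply: eq_bigr => l _; rewrite -sumrB; apply: eq_bigr => i _; ring.
have cross_le :
    \sum_(l : cellT) \sum_(i < n) rk i l * ln (r i l) <= rk i0 l0 * ln (r i0 l0).
  apply: le_trans (sum_le_term _ (term_le0 ^~ l0)).
  by apply: sum_le_term => l; apply: sumr_le0 => i _.
have c_bound : rk i0 l0 * ln (r i0 l0) <= c * ln (r i0 l0).
  by rewrite ler_wnM2r ?c_le_rk ?ln_le0.
have -> : r i0 l0 = expR (ln (r i0 l0)) by rewrite lnK ?posrE.
rewrite ltr_expR ltr_pdivrMr // mulrC; move: slope; rewrite slopeE; lra.
Qed.

Lemma uniform_force_minimizer delta r w : 0 < delta ->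
  delta <= expR (- ((#|{: cellT}| * n)%:R + 1) / c) ->
  (forall i l, 0 < r i l) -> admissible r w -> uniform_force r w ->
  is_minimizer h dt b rk delta r w.
Proof.
move=> delta_gt0 delta_le r_gt0 adm unif.
have r_min := J_min_of_dJ0 adm r_gt0 (fun dr dw => uniform_force_dJ0 unif).
have seg_min : min_toward_rk r w.
  move=> t /andP[t_gt0 t_le1]; apply: r_min.
    exact: (admissibleD t adm (tangentB adm admissible_rk)).
  by move=> i l; apply: segment_gt; rewrite ?(ltW t_gt0) ?t_le1 ?r_gt0 ?rk_gt0.
have r_gt := min_toward_rk_gt adm r_gt0 seg_min.
split; first by split=> // i l; apply/ltW/(le_lt_trans delta_le (r_gt i l)).
move=> r' w' [r'_ge adm']; apply: r_min adm' _ => i l.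
exact: lt_le_trans delta_gt0 (r'_ge i l).
Qed.

Lemma minimizer_uniform_force delta r w : 0 < delta ->
  delta <= expR (- ((#|{: cellT}| * n)%:R + 1) / c) -> delta <= c ->
  is_minimizer h dt b rk delta r w -> admissible r w /\ uniform_force r w.
Proof.
move=> delta_gt0 delta_le delta_le_c min; have [[r_ge adm] r_min] := min.
have r_gt0 i l : 0 < r i l := lt_le_trans delta_gt0 (r_ge i l).
have seg_min : min_toward_rk r w.
  move=> t /andP[t_gt0 t_le1]; apply: r_min; split.
    move=> i l; apply: segment_ge; rewrite ?(ltW t_gt0) ?t_le1 ?r_ge //.
    exact: le_trans delta_le_c (c_le_rk i l).
  exact: (admissibleD t adm (tangentB adm admissible_rk)).
have r_gt := min_toward_rk_gt adm r_gt0 seg_min.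
split=> //; apply: dJ0_uniform_force; apply: (dJ0_of_interior_min delta_gt0 min) => i l.
exact: le_lt_trans delta_le (r_gt i l).
Qed.

End Margin.


End Model.

Theorem theoremA1 (R : realType) (d n N : nat) (L dt : R)
  (b : 'I_n -> 'I_n -> R) (rk : 'I_n -> cell d N -> R) :
  (1 <= d)%N -> (2 <= n)%N -> (1 <= N)%N -> 0 < L -> 0 < dt ->
  (forall i j : 'I_n, i != j -> 0 < b i j) ->
  (forall i j : 'I_n, i != j -> b i j = b j i) ->
  (forall i l, 0 < rk i l) ->
  (forall l, \sum_(i < n) rk i l = 1) ->
  let h := L / N%:R in
  exists delta0 : R, 0 < delta0 /\
    forall delta : R, 0 < delta -> delta <= delta0 ->
    forall r1 : 'I_n -> cell d N -> R, (forall i l, 0 < r1 i l) ->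
      (scheme_solution h dt b rk r1 <->
       exists w, is_minimizer h dt b rk delta r1 w).
Proof.
move=> _ _ N_ge1 L_gt0 dt_gt0 b_gt0 b_sym rk_gt0 rk_sum1 h.
have h_gt0 : 0 < h by rewrite divr_gt0 // ltr0n.
have [|c c_gt0 c_le_rk] := pos_lower_bound (f := fun p : 'I_n * cell d N => rk p.1 p.2).
  by move=> [i l]; apply: rk_gt0.
have {}c_le_rk i l : c <= rk i l := c_le_rk (i, l).
exists (Num.min (expR (- ((#|{: cell d N}| * n)%:R + 1) / c)) c).
split=> [|delta delta_gt0]; first by rewrite lt_min expR_gt0.
rewrite le_min => /andP[delta_le delta_le_c] r1 r1_gt0.
rewrite (scheme_solutionP h dt_gt0 b_sym rk_sum1); split=> [[w [adm unif]] | [w min]].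
- exists w; exact: (uniform_force_minimizer h_gt0 dt_gt0 b_gt0 b_sym rk_gt0 rk_sum1
    c_gt0 c_le_rk delta_gt0 delta_le r1_gt0 adm unif).
- exists w; exact: (minimizer_uniform_force h_gt0 dt_gt0 b_gt0 b_sym rk_gt0 rk_sum1
    c_gt0 c_le_rk delta_gt0 delta_le delta_le_c min).
Qed.
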